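(* Let $N=(X,Y,<)$ be a node of a regular poset $(P,\le,A_1\ldots A_k)$. For every $k\in\mathbb{N}$ the following are equivalent: (1) for every non-empty $A\subseteq X$, $|A{\uparrow}\cap Y|\ge \min\{|A|+k,|Y|\}$; (2) for every non-empty $B\subseteq Y$, $|B{\downarrow}\cap X|\ge\min\{|B|+k,|X|\}$.
   Context: Let $(P,\le)$ be a finite poset of width $w$. For $A\subseteq P$ let $A{\uparrow}=\{y\in P: x\le y\text{ for some }x\in A\}$ and $A{\downarrow}=\{y\in P: y\le x\text{ for some }x\in A\}$. For maximal antichains $A,B$ write $A\sqsubseteq B$ if $A\subseteq B{\downarrow}$, and $A\sqsubset B$ if also $A\ne B$. For disjoint antichains $A\sqsubset B$, $(A,B,<)$ denotes the bipartite graph with classes $A,B$ and an edge $(a<b)$ for each $a\in A$, $b\in B$ with $a<b$; it is regular if every edge lies in some perfect matching. A regular poset is a triple $(P,\le,A_1\ldots A_k)$ where $A_1,\dots,A_k$ are maximum antichains of $P$ such that: they partition $P$; $(\{A_1,\dots,A_k\},\sqsubseteq)$ is a linear order with minimum $A_1$ and maximum $A_2$; $a<b$ for all $a\in A_1$, $b\in A_2$; and for every $t\in[2,k]$ and every two antichains $A_p\sqsubset A_s$ that are consecutive in the linear order $(\{A_1,\dots,A_t\},\sqsubseteq)$, the bipartite graph $(A_p,A_s,<)$ is regular. A node of the regular poset is a bipartite graph $(X,Y,<)$ such that for some $t\in[2,k]$ and some $A_p\sqsubset A_s$ consecutive in $(\{A_1,\dots,A_t\},\sqsubseteq)$, we have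 $X\subseteq A_p$, $Y\subseteq A_s$, and $X\cup Y$ is the vertex set of a connected component of $(A_p,A_s,<)$ (with edges $(x<y)$, $x\in X$, $y\in Y$, $x<y$). *)

From mathcomp Require Import all_boot.
Set Implicit Arguments. Unset Strict Implicit. Unset Printing Implicit Defensive.

Section Defs.
Variables (T : finType) (le : rel T).

Definition is_poset : Prop :=
  [/\ reflexive le, antisymmetric le & transitive le].

Definition lt (x y : T) : bool := (x != y) && le x y.

Definition upset (A : {set T}) : {set T} := [set y | [exists x in A, le x y]].
Definition downset (A : {set T}) : {set T} := [set y | [exists x in A, le y x]].

Definition antichain (A : {set T}) : Prop :=
  forall x y, x \in A -> y \in A -> le x y -> x = y.

Definition maximum_antichain (A : {set T}) : Prop :=
  antichain A /\ forall B : {set T}, antichain B -> #|B| <= #|A|.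

Definition sqle (A B : {set T}) : bool := A \subset downset B.
Definition sqlt (A B : {set T}) : bool := sqle A B && (A != B).

Definition is_perfect_matching (X Y : {set T}) (f : T -> T) : Prop :=
  [/\ {in X, forall x, lt x (f x)}, {in X &, injective f} & f @: X = Y].

Definition regular_bip (X Y : {set T}) : Prop :=
  forall a b, a \in X -> b \in Y -> lt a b ->
    exists f : T -> T, is_perfect_matching X Y f /\ f a = b.

Definition Ai (As : seq {set T}) (i : nat) : {set T} := nth set0 As i.

(* With 0-based indices: A_p and A_s (p, s < t) are consecutive in the
   linear order ({A_0,...,A_{t-1}}, ⊑). *)
Definition consecutive (As : seq {set T}) (t p s : nat) : Prop :=
  [/\ p < t, s < t, sqlt (Ai As p) (Ai As s) &
      forall q, q < t -> ~ (sqlt (Ai As p) (Ai As q) && sqlt (Ai As q) (Ai As s))].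

(* Regular poset (P, le, A_1 ... A_k), with A_1 = Ai As 0, A_2 = Ai As 1,
   k = size As; "t in [2,k]" becomes 2 <= t <= size As. *)
Definition regular_poset (As : seq {set T}) : Prop :=
  2 <= size As /\
      (forall i, i < size As -> maximum_antichain (Ai As i)) /\
      (forall i j, i < size As -> j < size As -> i != j ->
         [disjoint Ai As i & Ai As j]) /\
      (forall x, exists2 i, i < size As & x \in Ai As i) /\
      (forall i j, i < size As -> j < size As ->
         sqle (Ai As i) (Ai As j) || sqle (Ai As j) (Ai As i)) /\
      (forall i, i < size As -> sqle (Ai As 0) (Ai As i) /\ sqle (Ai As i) (Ai As 1)) /\
      (forall a b, a \in Ai As 0 -> b \in Ai As 1 -> lt a b) /\
      (forall t p s, 2 <= t <= size As -> consecutive As t p s ->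
         regular_bip (Ai As p) (Ai As s)).

Definition bip_edge (A B : {set T}) : rel T :=
  fun u v => ((u \in A) && (v \in B) && lt u v) || ((v \in A) && (u \in B) && lt v u).

Definition is_component (A B C : {set T}) : Prop :=
  exists2 u, u \in A :|: B & C = [set v | connect (bip_edge A B) u v].

Definition node (As : seq {set T}) (X Y : {set T}) : Prop :=
  exists t p s, [/\ 2 <= t <= size As, consecutive As t p s,
    X \subset Ai As p, Y \subset Ai As s &
    is_component (Ai As p) (Ai As s) (X :|: Y)].

End Defs.

(** A node is a connected component of a regular bipartite graph
    (A_p, A_s, <), so a perfect matching of that graph maps X onto Y and
    #|X| = #|Y|.  Given that, the two expansion conditions are dual: for a
    nonempty B in Y, either B↓ covers X, or A = X \ B↓ is nonempty and A↑
    misses B, so min(|A| + k, |Y|) <= |Y| - |B| < |Y| forces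
    |B↓ ∩ X| = |X| - |A| >= |B| + k. *)

From mathcomp Require Import all_boot.
From mathcomp Require Import zify.
Set Implicit Arguments. Unset Strict Implicit. Unset Printing Implicit Defensive.

Section Expansion.
Variable T : finType.

Definition expanding (r : rel T) (X Y : {set T}) (k : nat) : Prop :=
  forall A : {set T}, A \subset X -> A != set0 ->
    minn (#|A| + k) #|Y| <= #|upset r A :&: Y|.

Lemma upset_setD_downset (r : rel T) (X Y B : {set T}) :
  upset r (X :\: downset r B) :&: Y \subset Y :\: B.
Proof.
apply/subsetP => y; rewrite !inE => /andP[/existsP[x /andP[]]].
rewrite !inE => /andP[xnD _] rxy ->; rewrite andbT; apply: contra xnD => yB.
by apply/existsP; exists y; rewrite yB.
Qed.

Lemma expanding_converse (r : rel T) (X Y : {set T}) (k : nat) :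
  #|X| = #|Y| -> expanding r X Y k -> expanding (fun x y => r y x) Y X k.
Proof.
move=> cardXY expXY B sBY B0.
change (minn (#|B| + k) #|X| <= #|downset r B :&: X|).
have [XD0|XD_nonempty] := eqVneq (X :\: downset r B) set0.
  by move/eqP: XD0; rewrite setD_eq0 => /setIidPr ->; rewrite geq_minr.
have := expXY _ (subsetDl _ _) XD_nonempty.
have := subset_leq_card (upset_setD_downset r X Y B).
rewrite !cardsD (setIidPr sBY) (setIC X).
have := subset_leq_card (subsetIr (downset r B) X).
by move: B0; rewrite -card_gt0; lia.
Qed.

End Expansion.

Section Node.
Variables (T : finType) (le : rel T).

Lemma perfect_matching_edge (A B : {set T}) (f : T -> T) (x : T) :
  is_perfect_matching le A B f -> x \in A ->
  bip_edge le A B x (f x) /\ bip_edge le A B (f x) x.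
Proof.
case=> ltf _ fAB xA; have fxB : f x \in B by rewrite -fAB imset_f.
by rewrite /bip_edge xA fxB ltf ?orbT.
Qed.

Lemma component_perfect_matching (A B X Y : {set T}) (f : T -> T) :
  [disjoint A & B] -> is_perfect_matching le A B f ->
  X \subset A -> Y \subset B -> is_component le A B (X :|: Y) ->
  f @: X = Y.
Proof.
move=> dAB pmf sXA sYB [u _ compXY].
have matched x : x \in A -> (x \in X :|: Y) = (f x \in X :|: Y).
  move=> xA; have [e_xfx e_fxx] := perfect_matching_edge pmf xA.
  rewrite compXY !inE; apply/idP/idP => /connect_trans; apply; exact: connect1.
have [_ _ fAB] := pmf.
apply/eqP; rewrite eqEsubset; apply/andP; split; apply/subsetP.
- move=> _ /imsetP[x xX ->]; have xA := subsetP sXA x xX.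
  have fxB : f x \in B by rewrite -fAB imset_f.
  have /setUP[fxX|//] : f x \in X :|: Y by rewrite -matched // inE xX.
  by rewrite (disjointFr dAB (subsetP sXA _ fxX)) in fxB.
- move=> y yY; have yB := subsetP sYB y yY.
  move: (yB); rewrite -fAB => /imsetP[x xA eyfx]; rewrite eyfx imset_f //.
  have /setUP[//|xY] : x \in X :|: Y by rewrite matched // -eyfx inE yY orbT.
  by have := subsetP sYB x xY; rewrite (disjointFr dAB xA).
Qed.

Variable As : seq {set T}.
Hypothesis regAs : regular_poset le As.

Lemma consecutive_disjoint (t p s : nat) :
  2 <= t <= size As -> consecutive le As t p s -> [disjoint Ai As p & Ai As s].
Proof.
case/andP=> _ tAs [pt st /andP[_ neps] _]; have [_ [_ [disjAs _]]] := regAs.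
apply: disjAs; try exact: leq_trans tAs.
by apply: contraNneq neps => ->.
Qed.

Lemma consecutive_perfect_matching (t p s : nat) :
  2 <= t <= size As -> consecutive le As t p s ->
  exists f, is_perfect_matching le (Ai As p) (Ai As s) f.
Proof.
move=> ht cons; have [_ [maxAs [_ [_ [_ [_ [_ regbip]]]]]]] := regAs.
have [pAs sAs] : p < size As /\ s < size As.
  by case: cons => pt st _ _; case/andP: ht => _ tAs; split; exact: leq_trans tAs.
case: (set_0Vmem (Ai As p)) => [Ap0 | [a aAp]].
  have As0 : Ai As s = set0.
    apply/eqP; rewrite -cards_eq0 -leqn0 -(cards0 T) -Ap0.
    exact: (maxAs _ pAs).2 _ (maxAs _ sAs).1.
  by exists id; rewrite /is_perfect_matching Ap0 As0 imset0; split=> // x; rewrite inE.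
have [_ _ /andP[sqps _] _] := cons.
have := subsetP sqps a aAp; rewrite inE => /existsP[b /andP[bAs le_ab]].
have lt_ab : lt le a b.
  rewrite /lt le_ab andbT; apply: contraTneq bAs => <-.
  by rewrite (disjointFr (consecutive_disjoint ht cons) aAp).
by have [f [pmf _]] := regbip _ _ _ ht cons a b aAp bAs lt_ab; exists f.
Qed.

Lemma card_node (X Y : {set T}) : node le As X Y -> #|X| = #|Y|.
Proof.
move=> [t [p [s [ht cons sXAp sYAs compXY]]]].
have [f pmf] := consecutive_perfect_matching ht cons.
have [_ injf _] := pmf.
have dAps := consecutive_disjoint ht cons.
rewrite -(component_perfect_matching dAps pmf sXAp sYAs compXY).
by rewrite card_in_imset //; apply: sub_in2 injf; apply/subsetP.
Qed.

End Node.

Theorem proposition8 (T : finType) (le : rel T) (As : seq {set T}) (X Y : {set T}) :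
  is_poset le -> regular_poset le As -> node le As X Y ->
  forall k : nat,
    (forall A : {set T}, A \subset X -> A != set0 ->
       minn (#|A| + k) #|Y| <= #|upset le A :&: Y|) <->
    (forall B : {set T}, B \subset Y -> B != set0 ->
       minn (#|B| + k) #|X| <= #|downset le B :&: X|).
Proof.
move=> _ regAs nodeXY k; have cardXY := card_node regAs nodeXY.
split; first exact: expanding_converse.
exact: (@expanding_converse _ (fun x y => le y x) Y X k (esym cardXY)).
Qed.
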